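(* Let $(T,\sigma)$ be a gene tree and $S$ a species tree, and let $a,b,c,d\in L(T)$ be genes such that $\sigma(a),\sigma(b),\sigma(c),\sigma(d)$ are pairwise distinct. Set $u:=\operatorname{lca}_S(\sigma(a),\sigma(b),\sigma(c),\sigma(d))$, $v_1:=\operatorname{lca}_S(\sigma(a),\sigma(b))$ and $v_2:=\operatorname{lca}_S(\sigma(c),\sigma(d))$. If $v_1\prec_S u$, $v_2\prec_S u$, and $\overline{T}[a,b,c,d]=(ac|bd)$ or $\overline{T}[a,b,c,d]=(ad|bc)$, then $u\prec_S\mu(\operatorname{lca}_T(a,b,c,d))$ for every reconciliation map $\mu:V(T)\to V(S)\cup E(S)$ without horizontal gene transfer (satisfying (R0)–(R4)). In particular, $\operatorname{lca}_T(a,b,c,d)$ is a duplication event, i.e., $\mu(\operatorname{lca}_T(a,b,c,d))\in E(S)$.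
   Context: A planted phylogenetic tree $T$ has a distinguished leaf $0_T$ (planted root) whose unique neighbour $\rho_T$ is the root; every other inner vertex has at least two children; $L(T)$ are the leaves other than $0_T$. $p\preceq_T q$ means $q$ lies on the path from $p$ to $0_T$; $\operatorname{lca}_T(A)$ is the $\preceq_T$-minimal vertex above all of $A$. A species tree $S$ is a planted phylogenetic tree with planted root $0_S$, root $\rho_S$, leaf set $\mathscr{S}$; $V^0(S)$ are its inner vertices (neither leaves nor $0_S$). The order $\preceq_S$ extends to $V(S)\cup E(S)$ by placing each edge $e=pq$ ($q$ child of $p$) strictly between $q$ and $p$ ($w\prec_S e$ iff $w\preceq_S q$; $e\prec_S w$ iff $p\preceq_S w$; for edges $e=pq$, $e'=p'q'$, $e\prec_S e'$ iff $p\preceq_S q'$); $\operatorname{lca}_S$ is the $\preceq_S$-minimal vertex above the given elements. A gene tree $(T,\sigma)$ is a planted phylogenetic tree with $\sigma:L(T)\to\mathscr{S}$. A reconciliation map without horizontal gene transfer is $\mu:V(T)\to V(S)\cup E(S)$ with: (R0) $\mu(v)=0_S$ iff $v=0_T$; (R1) $\mu(v)=\sigma(v)$ for $v\in L(T)$; (R2) $v\prec_T w\Rightarrow\mu(v)\preceq_S\mu(w)$; for each $v$ with $\mu(v)\in V^0(S)$: (R3.i) $\mu(v)=\operatorname{lca}_S(\mu(v'),\mu(v''))$ for at least two distinct children $v',v''$ of $v$, (R3.ii) $\mu(v'),\mu(v'')$ are $\preceq_S$-incomparable for any two distinct children of $v$; and (R4) for leaves $x,y,z$, if $\mu(\operatorname{lca}_T(x,y))=\mu(\operatorname{lca}_T(x,z))\in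 V^0(S)$ then $\operatorname{lca}_S(\sigma(x),\sigma(y))=\operatorname{lca}_S(\sigma(x),\sigma(z))$. A vertex $v$ is a duplication if $\mu(v)\in E(S)$. The unrooted tree $\overline{T}$ is obtained by deleting $0_T$ and its edge and suppressing $\rho_T$ if it has two children; for four leaves $p,q,r,s$, $\overline{T}[p,q,r,s]$ is the subtree spanned by them with degree-2 vertices suppressed, and $\overline{T}[p,q,r,s]=(pq|rs)$ if some edge of it separates $\{p,q\}$ from $\{r,s\}$. *)

From mathcomp Require Import all_boot.
Set Implicit Arguments.
Unset Strict Implicit.
Unset Printing Implicit Defensive.

(* A planted tree on a finite vertex type, given by its parent map.
   [pt_root0] is the planted root 0_T; [pt_par 0_T = 0_T] by convention. *)
Record ptree := PTree {
  pt_V :> finType;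
  pt_par : pt_V -> pt_V;
  pt_root0 : pt_V
}.
Arguments pt_par : clear implicits.
Arguments pt_root0 : clear implicits.

Section Trees.
Variable T : ptree.

(* p ⪯_T q : q lies on the path from p to 0_T *)
Definition anc (p q : T) : bool := connect (frel (pt_par T)) p q.
Definition strict_anc (p q : T) : bool := anc p q && (p != q).

Definition child (v w : T) : bool := (v != pt_root0 T) && (pt_par T v == w).
Definition children (w : T) : {set T} := [set v | child v w].

Definition is_leaf (v : T) : bool := (v != pt_root0 T) && (children v == set0).
Definition is_inner (v : T) : bool := (v != pt_root0 T) && ~~ is_leaf v.

Definition planted_phylo : Prop :=
  [/\ pt_par T (pt_root0 T) = pt_root0 T,
      (forall v : T, anc v (pt_root0 T)),             (* connected, acyclic *)
      #|children (pt_root0 T)| = 1                    (* 0_T is a leaf with unique neighbour rho_T *)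
    & (forall v : T, is_inner v -> 2 <= #|children v|)].

Definition is_lca (s : seq T) (w : T) : bool :=
  all (fun x => anc x w) s && [forall w', all (fun x => anc x w') s ==> anc w w'].
Definition lca (s : seq T) : T := odflt (pt_root0 T) [pick w | is_lca s w].

(* four-leaf quartet: some edge (x, parent x) of T separates {p,q} from {r,s};
   removing that edge leaves the descendants of x on one side. *)
Definition quartet (p q r s : T) : Prop :=
  exists x : T, x != pt_root0 T /\
    ((anc p x && anc q x && ~~ anc r x && ~~ anc s x) ||
     (anc r x && anc s x && ~~ anc p x && ~~ anc q x)).
End Trees.

(* Elements of V(S) ∪ E(S): a vertex, or an edge represented by its lower
   endpoint q (the edge is (par q) q, and q must differ from 0_S). *)
Inductive vedge (V : Type) := Vx of V | Ed of V.
Arguments Vx {V}.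
Arguments Ed {V}.

Section Species.
Variable S : ptree.

Definition veLe (x y : vedge S) : bool :=
  match x, y with
  | Vx w, Vx w' => anc w w'
  | Vx w, Ed q => anc w q
  | Ed q, Vx w => anc (pt_par S q) w
  | Ed q, Ed q' => (q == q') || anc (pt_par S q) q'
  end.
Definition veLt (x y : vedge S) : bool :=
  match x, y with
  | Vx w, Vx w' => anc w w' && (w != w')
  | Vx w, Ed q => anc w q
  | Ed q, Vx w => anc (pt_par S q) w
  | Ed q, Ed q' => anc (pt_par S q) q'
  end.

Definition is_ve_lca (x y : vedge S) (w : S) : bool :=
  veLe x (Vx w) && veLe y (Vx w) &&
  [forall w', (veLe x (Vx w') && veLe y (Vx w')) ==> anc w w'].
Definition ve_lca (x y : vedge S) : S := odflt (pt_root0 S) [pick w | is_ve_lca x y w].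
End Species.

Definition reconciliation (T S : ptree) (sigma : T -> S) (mu : T -> vedge S) : Prop :=
  [/\ (* mu maps into V(S) ∪ E(S): edges have a lower endpoint different from 0_S *)
      (forall v q, mu v = Ed q -> q != pt_root0 S),
      (forall v, mu v = Vx (pt_root0 S) <-> v = pt_root0 T),
      (forall v, is_leaf v -> mu v = Vx (sigma v)),
      (forall v w, strict_anc v w -> veLe (mu v) (mu w)) &
   [/\
      (forall v x, mu v = Vx x -> is_inner x ->
         exists v' v'', [/\ v' != v'', child v' v, child v'' v &
                            x = ve_lca (mu v') (mu v'')]),
      (forall v x, mu v = Vx x -> is_inner x ->
         forall v' v'', child v' v -> child v'' v -> v' != v'' ->
           ~~ veLe (mu v') (mu v'') && ~~ veLe (mu v'') (mu v')) &
      (forall x y z, is_leaf x -> is_leaf y -> is_leaf z ->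
         mu (lca [:: x; y]) = mu (lca [:: x; z]) ->
         (exists w, mu (lca [:: x; y]) = Vx w /\ is_inner w) ->
         lca [:: sigma x; sigma y] = lca [:: sigma x; sigma z])]].

From mathcomp Require Import all_boot.
Set Implicit Arguments.
Unset Strict Implicit.
Unset Printing Implicit Defensive.

(* Let w = lca_T(a,b,c,d). The quartet topology puts one gene of {a,b} and one
   of {c,d} below a common child w' of w. As v1 and v2 lie strictly below u,
   they are incomparable, so every vertex above a species of {a,b} and one of
   {c,d} is above u; hence mu(w') lies above u. If mu(w) were a vertex, it
   would be an inner vertex, and by (R3.ii) any child of w whose image lies
   above the species of one of a, b, c, d must be w' itself; then all four
   genes lie below w', contradicting w = lca_T(a,b,c,d). So mu(w) is an edge,
   and its lower endpoint lies above all four species, hence above u. *)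

Section PlantedTree.
Variable T : ptree.
Implicit Types (s : seq T) (p q r x y z v w : T).
Local Notation par := (pt_par T).
Local Notation root := (pt_root0 T).

Lemma ancP x y : reflect (exists n, iter n par x = y) (anc x y).
Proof.
apply: (iffP idP) => [xy | [n <-]]; last exact: fconnect_iter.
by exists (findex par x y); apply: iter_findex.
Qed.

Lemma anc_iter n x : anc x (iter n par x).
Proof. exact: fconnect_iter. Qed.

Lemma anc_refl x : anc x x.
Proof. exact: connect0. Qed.

Lemma anc_par x : anc x (par x).
Proof. exact: fconnect1. Qed.

Lemma anc_trans y x z : anc x y -> anc y z -> anc x z.
Proof. exact: connect_trans. Qed.

Lemma anc_total x y z : anc x y -> anc x z -> anc y z || anc z y.
Proof.
move=> /ancP [n <-] /ancP [m <-].
have [le_nm | /ltnW le_mn] := leqP n m.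
  by rewrite -(subnK le_nm) iterD anc_iter.
by rewrite -(subnK le_mn) iterD anc_iter orbT.
Qed.

Lemma anc_par_neq q y : anc q y -> q != y -> anc (par q) y.
Proof.
case/ancP=> [[|n] <-]; first by rewrite eqxx.
by rewrite iterSr anc_iter.
Qed.

Hypothesis planted : planted_phylo T.

Lemma par_root : par root = root.
Proof. by case: planted. Qed.

Lemma anc_root x : anc x root.
Proof. by case: planted. Qed.

Lemma iter_cycle_root k x : 0 < k -> iter k par x = x -> x = root.
Proof.
move=> k_gt0 cyc; have /ancP [n xn] := anc_root x.
have periodic j : iter (j * k) par x = x.
  by elim: j => //= j IHj; rewrite mulSn iterD IHj cyc.
have le_n : n <= n * k by rewrite leq_pmulr.
by rewrite -(periodic n) -(subnK le_n) iterD xn iter_fix // par_root.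
Qed.

Lemma anc_antisym x y : anc x y -> anc y x -> x = y.
Proof.
case/ancP=> [[|n] xy] /ancP [m yx]; first by [].
have x_root : x = root.
  by apply: (@iter_cycle_root (m + n.+1)); [rewrite addnS | rewrite iterD xy].
by rewrite -xy x_root iter_fix // par_root.
Qed.

Lemma anc_child x y : anc x y -> x != y -> exists2 c, child c y & anc x c.
Proof.
case/ancP=> n; elim: n x => [|n IHn] x; first by move=> /= -> /[!eqxx].
rewrite iterSr => xy x_neq_y.
have [pxy | pxy] := eqVneq (par x) y.
  exists x; last exact: anc_refl.
  rewrite /child pxy eqxx andbT; apply: contraNneq x_neq_y => x_root.
  by rewrite -pxy x_root par_root.
have [c cy pxc] := IHn _ xy pxy.
by exists c => //; apply: anc_trans (anc_par x) pxc.
Qed.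

Lemma child_strict_anc v w : child v w -> strict_anc v w.
Proof.
case/andP=> v_neq_root /eqP <-; rewrite /strict_anc anc_par /=.
by apply: contraNneq v_neq_root => /esym /(@iter_cycle_root 1) ->.
Qed.

Lemma anc_leaf p y : is_leaf p -> anc y p -> y = p.
Proof.
case/andP=> _ /eqP no_child yp; apply/eqP; apply: contraT => y_neq_p.
have [c cp _] := anc_child yp y_neq_p.
by have := in_set0 c; rewrite -no_child inE cp.
Qed.

Lemma is_lca_anc s w x : is_lca s w -> x \in s -> anc x w.
Proof. by case/andP=> /allP + _; apply. Qed.

Lemma is_lca_min s w w' : is_lca s w -> all (fun x => anc x w') s -> anc w w'.
Proof. by case/andP=> _ /forallP /(_ w') /implyP. Qed.

Lemma lca_is_lca s : s != [::] -> is_lca s (lca s).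
Proof.
case: s => [//|x s] _; rewrite /lca; case: pickP => [//|not_lca]; exfalso.
have ub_iter : exists n, all (fun y => anc y (iter n par x)) (x :: s).
  have /ancP [n xn] := anc_root x; exists n; rewrite xn.
  by apply/allP => y _; apply: anc_root.
case: (ex_minnP ub_iter) => n ub_n min_n.
move/negP: (not_lca (iter n par x)); apply; rewrite /is_lca ub_n /=.
apply/forallP => w'; apply/implyP => ub_w'.
have /ancP [m xm] := (andP ub_w').1.
have le_nm : n <= m by apply: min_n; rewrite xm.
by rewrite -xm -(subnK le_nm) iterD anc_iter.
Qed.

(* All vertices other than the planted root lie below its unique child. *)
Lemma lca_neq_root s : s != [::] -> all (predC1 root) s -> lca s != root.
Proof.
move=> s_nil s_nonroot.
case: planted => _ _ /eqP/cards1P [rho children_root] _.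
have below_rho v : v != root -> anc v rho.
  move=> v_nonroot; have [c c_root vc] := anc_child (anc_root v) v_nonroot.
  have : c \in children root by rewrite inE.
  by rewrite children_root inE => /eqP <-.
have /andP [rho_nonroot /eqP par_rho] : child rho root.
  have : rho \in children root by rewrite children_root inE.
  by rewrite inE.
apply: contraNneq rho_nonroot => lca_root; apply/eqP/anc_antisym.
  by rewrite -par_rho anc_par.
rewrite -lca_root; apply: is_lca_min (lca_is_lca s_nil) _.
by apply/allP => v /(allP s_nonroot); apply: below_rho.
Qed.

Lemma inner_above_distinct x y z :
  x != root -> anc y x -> anc z x -> y != z -> is_inner x.
Proof.
move=> x_nonroot yx zx; rewrite /is_inner x_nonroot /=; apply: contra => x_leaf.
by rewrite (anc_leaf x_leaf yx) (anc_leaf x_leaf zx).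
Qed.

Lemma quartet_child (p q r s w : T) : quartet p q r s -> anc p w -> anc r w ->
  exists2 w', child w' w & (anc p w' && anc q w') || (anc r w' && anc s w').
Proof.
case=> x [_ sep] pw rw.
have split_at y y' : anc y x -> anc y w -> anc y' w -> ~~ anc y' x ->
    exists2 c, child c w & anc x c.
  move=> yx yw y'w y'x; apply: anc_child.
    by case/orP: (anc_total yx yw) => // wx; rewrite (anc_trans y'w wx) in y'x.
  by apply: contraNneq y'x => ->.
case/orP: sep => [/andP [/andP [/andP [px qx] rx] _]
                 | /andP [/andP [/andP [rx sx] px] _]].
  have [c cw xc] := split_at p r px pw rw rx.
  by exists c => //; rewrite (anc_trans px xc) (anc_trans qx xc).
have [c cw xc] := split_at r p rx rw pw px.
by exists c => //; rewrite (anc_trans rx xc) (anc_trans sx xc) orbT.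
Qed.

(* If v1 and v2 were comparable, one of them would bound all four vertices
   and hence equal their lca u. *)
Lemma lca_cross p1 p2 p3 p4 v1 v2 u x y z :
  is_lca [:: p1; p2; p3; p4] u ->
  anc p1 v1 -> anc p2 v1 -> anc p3 v2 -> anc p4 v2 ->
  strict_anc v1 u -> strict_anc v2 u ->
  x \in [:: p1; p2] -> y \in [:: p3; p4] -> anc x z -> anc y z -> anc u z.
Proof.
move=> lca_u p1v1 p2v1 p3v2 p4v2 /andP [v1u v1_neq_u] /andP [v2u v2_neq_u].
move=> x_in y_in xz yz.
have above_u w : anc v1 w -> anc v2 w -> anc u w.
  move=> v1w v2w; apply: is_lca_min lca_u _.
  by rewrite /= (anc_trans p1v1) // (anc_trans p2v1) //
             (anc_trans p3v2) // (anc_trans p4v2).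
have incomparable : ~~ (anc v1 v2 || anc v2 v1).
  apply/norP; split.
    apply: contra v2_neq_u => v1v2.
    by rewrite (anc_antisym v2u (above_u _ v1v2 (anc_refl _))).
  apply: contra v1_neq_u => v2v1.
  by rewrite (anc_antisym v1u (above_u _ (anc_refl _) v2v1)).
have xv1 : anc x v1 by move: x_in; rewrite !inE => /pred2P [] ->.
have yv2 : anc y v2 by move: y_in; rewrite !inE => /pred2P [] ->.
case/orP: (anc_total xv1 xz) => [v1z | zv1].
  case/orP: (anc_total yv2 yz) => [v2z | zv2]; first exact: above_u.
  by rewrite (anc_trans v1z zv2) in incomparable.
by rewrite (anc_total (anc_trans yz zv1) yv2) in incomparable.
Qed.

Lemma lca4_cross p1 p2 p3 p4 x y z :
  let u := lca [:: p1; p2; p3; p4] in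
  strict_anc (lca [:: p1; p2]) u -> strict_anc (lca [:: p3; p4]) u ->
  x \in [:: p1; p2] -> y \in [:: p3; p4] -> anc x z -> anc y z -> anc u z.
Proof.
move=> u v12u v34u.
have lca12 := lca_is_lca (isT : [:: p1; p2] != [::]).
have lca34 := lca_is_lca (isT : [:: p3; p4] != [::]).
have [p1_12 p2_12] : anc p1 (lca [:: p1; p2]) /\ anc p2 (lca [:: p1; p2]).
  by split; apply: (is_lca_anc lca12); rewrite !inE eqxx ?orbT.
have [p3_34 p4_34] : anc p3 (lca [:: p3; p4]) /\ anc p4 (lca [:: p3; p4]).
  by split; apply: (is_lca_anc lca34); rewrite !inE eqxx ?orbT.
exact: (lca_cross (lca_is_lca (isT : [:: p1; p2; p3; p4] != [::]))
          p1_12 p2_12 p3_34 p4_34 v12u v34u).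
Qed.

Lemma quartet_cross_child (a b c d w : T) :
  quartet a c b d \/ quartet a d b c -> anc a w -> anc b w ->
  exists2 w', child w' w &
    exists x y, [/\ x \in [:: a; b], y \in [:: c; d], anc x w' & anc y w'].
Proof.
move=> quartet_abcd aw bw.
case: quartet_abcd => /quartet_child /(_ aw bw)
    [w' w'w /orP [/andP [xw' yw'] | /andP [xw' yw']]]; exists w' => //;
  [exists a, c | exists b, d | exists a, d | exists b, c];
  by rewrite !inE !eqxx ?orbT.
Qed.

End PlantedTree.

Section SpeciesOrder.
Variable S : ptree.
Implicit Types (x z : S) (e : vedge S).

Definition ve_bottom e : S := match e with Vx w => w | Ed q => q end.

Lemma veLe_Vx z e : veLe (Vx z) e = anc z (ve_bottom e).
Proof. by case: e. Qed.

Lemma veLe_Vx_bottom e x : veLe e (Vx x) -> anc (ve_bottom e) x.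
Proof. by case: e => [y | q] //= /(anc_trans (anc_par q)). Qed.

Lemma veLe_total z e1 e2 : anc z (ve_bottom e1) -> anc z (ve_bottom e2) ->
  veLe e1 e2 || veLe e2 e1.
Proof.
move=> ze1 ze2; have := anc_total ze1 ze2.
case: e1 e2 {ze1 ze2} => [y | q] [y' | q'] //=.
- case/orP=> [-> // | q'y]; have [-> | q'_neq_y] := eqVneq q' y.
    by rewrite anc_refl.
  by rewrite anc_par_neq ?orbT.
- case/orP=> [qy' | ->]; last by rewrite orbT.
  have [-> | q_neq_y'] := eqVneq q y'; first by rewrite anc_refl orbT.
  by rewrite anc_par_neq.
- have [-> // | q_neq_q'] := eqVneq q q'.
  case/orP=> [qq' | q'q]; first by rewrite anc_par_neq.
  by rewrite (anc_par_neq q'q) ?orbT // eq_sym.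
Qed.

End SpeciesOrder.

Section Reconciliation.
Variables (T S : ptree) (sigma : T -> S) (mu : T -> vedge S).
Hypotheses (planted_T : planted_phylo T) (planted_S : planted_phylo S).
Hypothesis mu_root : forall v, mu v = Vx (pt_root0 S) <-> v = pt_root0 T.
Hypothesis mu_leaf : forall v, is_leaf v -> mu v = Vx (sigma v).
Hypothesis mu_mono : forall v w, strict_anc v w -> veLe (mu v) (mu w).
Hypothesis mu_children_incomparable : forall v x, mu v = Vx x -> is_inner x ->
  forall v' v'', child v' v -> child v'' v -> v' != v'' ->
    ~~ veLe (mu v') (mu v'') && ~~ veLe (mu v'') (mu v').

Lemma anc_species p y : is_leaf p -> anc p y -> anc (sigma p) (ve_bottom (mu y)).
Proof.
move=> p_leaf py; have [<- | p_neq_y] := eqVneq p y.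
  by rewrite mu_leaf ?anc_refl.
by rewrite -veLe_Vx -mu_leaf // mu_mono // /strict_anc py.
Qed.

(* The images of [w'] and of the child of [w] above [p] both lie above
   [sigma p], hence are comparable; by (R3.ii) the two children coincide. *)
Lemma speciation_child_anc w w' x p : mu w = Vx x -> is_inner x -> child w' w ->
  is_leaf p -> anc p w -> p != w -> anc (sigma p) (ve_bottom (mu w')) ->
  anc p w'.
Proof.
move=> mu_w x_inner w'w p_leaf pw p_neq_w pw'.
have [c cw pc] := anc_child planted_T pw p_neq_w.
have [-> // | w'_neq_c] := eqVneq w' c.
have := mu_children_incomparable mu_w x_inner w'w cw w'_neq_c.
by case/orP: (veLe_total pw' (anc_species p_leaf pc)) => -> /andP [].
Qed.

Lemma lca_duplication (s : seq T) (p1 p2 w' : T) :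
  all (@is_leaf T) s -> p1 \in s -> p2 \in s -> sigma p1 != sigma p2 ->
  child w' (lca s) ->
  {in s, forall p, anc (sigma p) (ve_bottom (mu w'))} ->
  exists q, mu (lca s) = Ed q.
Proof.
move=> s_leaves p1s p2s sigma_p12 w'w below_w'.
set w := lca s; case mu_w: (mu w) => [x | q]; last by exists q.
have s_nil : s != [::] by apply: contraTneq p1s => ->.
have lca_w := lca_is_lca planted_T s_nil.
have w_nonroot : w != pt_root0 T.
  by apply: (lca_neq_root planted_T s_nil); apply: sub_all s_leaves => p /andP [].
have x_nonroot : x != pt_root0 S.
  apply: contraNneq w_nonroot => x_root.
  by apply/eqP/(mu_root w).1; rewrite mu_w x_root.
have w'_below_x : anc (ve_bottom (mu w')) x.
  by apply: veLe_Vx_bottom; rewrite -mu_w mu_mono // child_strict_anc.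
have x_inner : is_inner x.
  apply: (inner_above_distinct planted_S x_nonroot _ _ sigma_p12);
    exact: anc_trans (below_w' _ _) w'_below_x.
have p_neq_w p : p \in s -> p != w.
  move=> ps; apply: contraNneq sigma_p12 => p_w.
  have leaf_eq q : q \in s -> q = p.
    move=> qs; apply: (anc_leaf planted_T (allP s_leaves p ps)).
    by rewrite p_w; apply: is_lca_anc lca_w qs.
  by rewrite (leaf_eq p1 p1s) (leaf_eq p2 p2s).
have /andP [w'_anc_w /negP w'_neq_w] := child_strict_anc planted_T w'w.
exfalso; apply/w'_neq_w/eqP/anc_antisym => //.
apply: (is_lca_min lca_w); apply/allP => p ps.
apply: speciation_child_anc mu_w x_inner w'w _ _ (p_neq_w p ps) (below_w' p ps).
  exact: (allP s_leaves).
exact: is_lca_anc lca_w ps.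
Qed.

End Reconciliation.

Theorem theorem2 (T S : ptree) (sigma : T -> S) (a b c d : T) :
  planted_phylo T -> planted_phylo S ->
  (forall v : T, is_leaf v -> is_leaf (sigma v)) ->
  is_leaf a -> is_leaf b -> is_leaf c -> is_leaf d ->
  uniq [:: sigma a; sigma b; sigma c; sigma d] ->
  let u := lca [:: sigma a; sigma b; sigma c; sigma d] in
  let v1 := lca [:: sigma a; sigma b] in
  let v2 := lca [:: sigma c; sigma d] in
  strict_anc v1 u -> strict_anc v2 u ->
  (quartet a c b d \/ quartet a d b c) ->
  forall mu : T -> vedge S, reconciliation sigma mu ->
    veLt (Vx u) (mu (lca [:: a; b; c; d])) /\
    (exists q, mu (lca [:: a; b; c; d]) = Ed q).
Proof.
move=> planted_T planted_S _ la lb lc ld uniq_species u v1 v2 v1u v2u quartet_abcd.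
move=> mu [_ mu_root mu_leaf mu_mono [_ mu_children_incomparable _]].
have leaves : all (@is_leaf T) [:: a; b; c; d] by rewrite /= la lb lc ld.
have sigma_ab : sigma a != sigma b.
  by case/andP: uniq_species; rewrite !inE negb_or => /andP [].
have lca_w := lca_is_lca planted_T (isT : [:: a; b; c; d] != [::]).
set w := lca _ in lca_w *.
have lca_u :=
  lca_is_lca planted_S (isT : [:: sigma a; sigma b; sigma c; sigma d] != [::]).
have species_below p y : p \in [:: a; b; c; d] -> anc p y ->
    anc (sigma p) (ve_bottom (mu y)).
  by move=> ps; apply: (anc_species mu_leaf mu_mono (allP leaves p ps)).
have [aw bw] : anc a w /\ anc b w.
  by split; apply: (is_lca_anc lca_w); rewrite !inE eqxx ?orbT.
have [w' w'w [x [y [xab ycd xw' yw']]]] :=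
  quartet_cross_child planted_T quartet_abcd aw bw.
have [xs ys] : x \in [:: a; b] ++ [:: c; d] /\ y \in [:: a; b] ++ [:: c; d].
  by rewrite !mem_cat xab ycd orbT.
have u_below_w' : anc u (ve_bottom (mu w')).
  exact: (lca4_cross planted_S v1u v2u (map_f sigma xab) (map_f sigma ycd)
            (species_below x w' xs xw') (species_below y w' ys yw')).
have [q mu_w] : exists q, mu w = Ed q.
  apply: (lca_duplication planted_T planted_S mu_root mu_leaf mu_mono mu_children_incomparable
            leaves (mem_head a _) _ sigma_ab w'w); first by rewrite !inE eqxx orbT.
  move=> p ps; apply: anc_trans u_below_w'.
  exact: (is_lca_anc lca_u (map_f sigma ps)).
have below_q p : p \in [:: a; b; c; d] -> anc (sigma p) q.
  by move=> ps; have := species_below p w ps (is_lca_anc lca_w ps); rewrite mu_w.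
split; last by exists q.
rewrite mu_w /=; apply: (is_lca_min lca_u).
by rewrite /= !below_q // !inE eqxx ?orbT.
Qed.
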